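(* Let $A\in\mathbb{R}^{m\times N}$ with $N=pn$, and let $\mathbf{x}\in\mathbb{R}^N$ be block $k$-sparse, i.e. $\lVert\mathbf{x}\rVert_{2,0}\le k$. Suppose there exists at least one $q\in(1,\infty]$ such that $$k<\min_{\mathbf{z}\in\ker A\setminus\{\mathbf{0}\}} 2^{\frac{q}{1-q}}\,k_q(\mathbf{z}).$$ Then the unique solution of the noise-free block basis pursuit problem $$\min_{\mathbf{z}\in\mathbb{R}^N}\lVert\mathbf{z}\rVert_{2,1}\quad\text{s.t.}\quad A\mathbf{z}=A\mathbf{x}$$ is $\mathbf{x}$.
   Context: Every $\mathbf{x}\in\mathbb{R}^N$ is partitioned into $p$ consecutive blocks of length $n$: $\mathbf{x}=[\mathbf{x}_1^T,\dots,\mathbf{x}_p^T]^T$ with $\mathbf{x}_i\in\mathbb{R}^n$. Mixed norms: $\lVert\mathbf{x}\rVert_{2,0}=\#\{i:\mathbf{x}_i\neq\mathbf{0}\}$, $\lVert\mathbf{x}\rVert_{2,q}=(\sum_{i=1}^p\lVert\mathbf{x}_i\rVert_2^q)^{1/q}$ for $0<q<\infty$, $\lVert\mathbf{x}\rVert_{2,\infty}=\max_i\lVert\mathbf{x}_i\rVert_2$. For nonzero $\mathbf{x}$ and $q\in(1,\infty)$ the $q$-ratio block sparsity is $k_q(\mathbf{x})=\left(\lVert\mathbf{x}\rVert_{2,1}/\lVert\mathbf{x}\rVert_{2,q}\right)^{q/(q-1)}$, and $k_\infty(\mathbf{x})=\lVert\mathbf{x}\rVert_{2,1}/\lVert\mathbf{x}\rVert_{2,\infty}$.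 For $q=\infty$ the exponent $q/(1-q)$ is interpreted as its limit $-1$ (and $q/(q-1)$ as $1$). $\ker A=\{\mathbf{z}:A\mathbf{z}=\mathbf{0}\}$. *)

From mathcomp Require Import all_boot all_order all_algebra.
From mathcomp Require Import all_classical all_reals all_analysis.
Set Implicit Arguments. Unset Strict Implicit. Unset Printing Implicit Defensive.
Import Order.TTheory GRing.Theory Num.Theory.
Local Open Scope ring_scope.

Section BlockNorms.
Variables (R : realType) (p n : nat).

(* index of entry j of block i in R^(p*n): i*n + j *)
Lemma blk_idx_proof (i : 'I_p) (j : 'I_n) : (i * n + j < p * n)%N.
Proof.
case: i j => i Hi [j Hj] /=.
apply: (@leq_trans ((i.+1) * n)); first by rewrite mulSn addnC ltn_add2r.
by rewrite leq_mul2r Hi orbT.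
Qed.

Definition blk_idx (i : 'I_p) (j : 'I_n) : 'I_(p * n) := Ordinal (blk_idx_proof i j).

Definition block (x : 'cV[R]_(p * n)) (i : 'I_p) : 'cV[R]_n :=
  \col_(j < n) x (blk_idx i j) 0.

Definition bnorm (x : 'cV[R]_(p * n)) (i : 'I_p) : R :=
  Num.sqrt (\sum_(j < n) (block x i j 0) ^+ 2).

Definition norm20 (x : 'cV[R]_(p * n)) : nat := #|[set i : 'I_p | block x i != 0]|.

Definition norm2q (q : R) (x : 'cV[R]_(p * n)) : R :=
  powR (\sum_(i < p) powR (bnorm x i) q) q^-1.

Definition norm21 (x : 'cV[R]_(p * n)) : R := \sum_(i < p) bnorm x i.

Definition norm2inf (x : 'cV[R]_(p * n)) : R := \big[Num.max/0]_(i < p) bnorm x i.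

Definition kq (q : \bar R) (x : 'cV[R]_(p * n)) : R :=
  match q with
  | EFin r => powR (norm21 x / norm2q r x) (r / (r - 1))
  | +oo%E => norm21 x / norm2inf x
  | -oo%E => 0
  end.

Definition two_pow_q (q : \bar R) : R :=
  match q with
  | EFin r => powR 2 (r / (1 - r))
  | +oo%E => 2^-1
  | -oo%E => 0
  end.

End BlockNorms.

(* By Hoelder's inequality, for every set S of blocks,
     sum_(i in S) ||z_i||_2 <= |S|^(1 - 1/q) ||z||_(2,q)   (<= |S| ||z||_(2,oo) if q = oo),
   while k < 2^(q/(1-q)) k_q(z) says exactly k^(1 - 1/q) ||z||_(2,q) < ||z||_(2,1) / 2.
   Hence every nonzero z in ker A puts less than half of its (2,1)-mass on any k blocks:
   this is the block null space property on the block support S of x.  For a feasible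
   w <> x, put z = w - x; since x vanishes off S,
     ||x||_(2,1) <= sum_(i in S) (||w_i|| + ||z_i||) < sum_(i in S) ||w_i|| + sum_(i notin S) ||z_i||
                 = ||w||_(2,1). *)

From mathcomp Require Import all_boot all_order all_algebra.
From mathcomp Require Import all_classical all_reals all_analysis.
From mathcomp Require Import ring.

Set Implicit Arguments.
Unset Strict Implicit.
Unset Printing Implicit Defensive.

Import Order.TTheory GRing.Theory Num.Theory.
Local Open Scope classical_set_scope.
Local Open Scope ring_scope.

Lemma powR_divr (R : realType) (x y r : R) : 0 <= x -> 0 < y -> (x / y) `^ r = x `^ r / y `^ r.
Proof.
move=> x0 y0; rewrite powRM //; last by rewrite invr_ge0; exact: ltW.
by rewrite -(powR_inv1 (ltW y0)) -powRrM mulN1r powRN.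
Qed.

Section FiniteHoelder.
Variables (R : realType) (I : finType).
Implicit Types (a b : I -> R) (P Q : R).

Lemma hoelder_sum a b P Q :
    (forall i, 0 <= a i) -> (forall i, 0 <= b i) -> 0 < P -> 0 < Q ->
    P^-1 + Q^-1 = 1 ->
  \sum_i a i * b i <= (\sum_i a i `^ P) `^ P^-1 * (\sum_i b i `^ Q) `^ Q^-1.
Proof.
move=> a0 b0 P0 Q0 PQ.
have sum_powR_ge0 (c : I -> R) E : 0 <= \sum_i c i `^ E.
  by apply: sumr_ge0 => i _; exact: powR_ge0.
set SA := \sum_i a i `^ P; set SB := \sum_i b i `^ Q.
have [SA0|SAn] := eqVneq SA 0.
  rewrite big1 ?mulr_ge0 ?powR_ge0 // => i _.
  by rewrite (powR_eq0_eq0 (psumr_eq0P (fun i _ => powR_ge0 _ _) SA0 (i:=i) isT)) mul0r.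
have [SB0|SBn] := eqVneq SB 0.
  rewrite big1 ?mulr_ge0 ?powR_ge0 // => i _.
  by rewrite (powR_eq0_eq0 (psumr_eq0P (fun i _ => powR_ge0 _ _) SB0 (i:=i) isT)) mulr0.
set A := SA `^ P^-1; set B := SB `^ Q^-1.
have A0 : 0 < A by rewrite powR_gt0 // lt_def SAn sum_powR_ge0.
have B0 : 0 < B by rewrite powR_gt0 // lt_def SBn sum_powR_ge0.
have AP : A `^ P = SA by rewrite -powRrM mulVf ?gt_eqF ?powRr1 ?sum_powR_ge0.
have BQ : B `^ Q = SB by rewrite -powRrM mulVf ?gt_eqF ?powRr1 ?sum_powR_ge0.
clearbody A B.
have young i : a i / A * (b i / B) <= a i `^ P / SA / P + b i `^ Q / SB / Q.
  have := conjugate_powR (divr_ge0 (a0 i) (ltW A0)) (divr_ge0 (b0 i) (ltW B0)) P0 Q0 PQ.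
  by rewrite (powR_divr _ (a0 i) A0) (powR_divr _ (b0 i) B0) AP BQ.
have sum_young : \sum_i a i / A * (b i / B) <= 1.
  apply: le_trans (ler_sum _ (fun i _ => young i)) _.
  by rewrite big_split /= -!mulr_suml -/SA -/SB !mulfV // !mul1r PQ.
move: sum_young; under eq_bigr => i _ do rewrite mulrACA -invfM.
by rewrite -mulr_suml ler_pdivrMr ?mulr_gt0 // mul1r.
Qed.

Lemma cauchy_schwarz_sum a b :
  \sum_i a i * b i <= Num.sqrt (\sum_i a i ^+ 2) * Num.sqrt (\sum_i b i ^+ 2).
Proof.
have sqrtE (c : I -> R) : Num.sqrt (\sum_i c i ^+ 2) = (\sum_i `|c i| `^ 2) `^ 2^-1.
  rewrite powR12_sqrt; last by apply: sumr_ge0 => i _; exact: powR_ge0.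
  by congr Num.sqrt; apply: eq_bigr => i _; rewrite powR_mulrn // real_normK ?num_real.
rewrite !sqrtE; apply: (le_trans (y := \sum_i `|a i| * `|b i|)).
  by apply: ler_sum => i _; rewrite -normrM ler_norm.
by apply: hoelder_sum => //; field.
Qed.

Lemma sqrt_sumr_sqrD a b :
  Num.sqrt (\sum_i (a i + b i) ^+ 2) <=
  Num.sqrt (\sum_i a i ^+ 2) + Num.sqrt (\sum_i b i ^+ 2).
Proof.
have sqr_sum_ge0 (c : I -> R) : 0 <= \sum_i c i ^+ 2 by apply: sumr_ge0 => i _; exact: sqr_ge0.
rewrite -(ger0_norm (addr_ge0 (sqrtr_ge0 _) (sqrtr_ge0 _))) -sqrtr_sqr.
rewrite ler_sqrt ?sqr_ge0 //; under eq_bigr => i _ do rewrite sqrrD.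
rewrite !big_split /= sqrrD !sqr_sqrtr // lerD2r lerD2l mulr2n.
by apply: lerD; exact: cauchy_schwarz_sum.
Qed.

End FiniteHoelder.

Section ColumnNorm.
Variables (R : realType) (n : nat).
Implicit Types u v : 'cV[R]_n.

Definition l2norm v : R := Num.sqrt (\sum_j v j 0 ^+ 2).

Lemma l2norm_ge0 v : 0 <= l2norm v.
Proof. exact: sqrtr_ge0. Qed.

Lemma l2norm0 : l2norm 0 = 0.
Proof. by rewrite /l2norm big1 ?sqrtr0 // => j _; rewrite mxE expr0n. Qed.

Lemma l2normN v : l2norm (- v) = l2norm v.
Proof. by rewrite /l2norm; under eq_bigr => j _ do rewrite mxE sqrrN. Qed.

Lemma l2normD u v : l2norm (u + v) <= l2norm u + l2norm v.
Proof.
rewrite /l2norm; under eq_bigr => j _ do rewrite mxE.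
exact: sqrt_sumr_sqrD.
Qed.

Lemma l2normB u v : l2norm (u - v) <= l2norm u + l2norm v.
Proof. by rewrite -(l2normN v) l2normD. Qed.

End ColumnNorm.

Section Blocks.
Variables (R : realType) (p n : nat).
Implicit Types x y z w : 'cV[R]_(p * n).

Lemma blockD x y i : block (x + y) i = block x i + block y i.
Proof. by apply/matrixP => j k; rewrite !mxE. Qed.

Lemma blockN x i : block (- x) i = - block x i.
Proof. by apply/matrixP => j k; rewrite !mxE. Qed.

Lemma blockB x y i : block (x - y) i = block x i - block y i.
Proof. by rewrite blockD blockN. Qed.

Lemma bnormE x i : bnorm x i = l2norm (block x i).
Proof. by []. Qed.

Lemma bnorm_ge0 x i : 0 <= bnorm x i.
Proof. exact: l2norm_ge0. Qed.

Lemma bnormB x y i : bnorm (x - y) i <= bnorm x i + bnorm y i.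
Proof. by rewrite !bnormE blockB; exact: l2normB. Qed.

Lemma norm21_ge0 x : 0 <= norm21 x.
Proof. by apply: sumr_ge0 => i _; exact: bnorm_ge0. Qed.

Lemma norm21_split (S : {set 'I_p}) x :
  norm21 x = \sum_(i in S) bnorm x i + \sum_(i in ~: S) bnorm x i.
Proof.
rewrite /norm21 (bigID (mem S)) /=; congr (_ + _).
by apply: eq_bigl => i; rewrite !inE.
Qed.

Lemma sum_bnorm_le_norm2inf (S : {set 'I_p}) z :
  \sum_(i in S) bnorm z i <= #|S|%:R * norm2inf z.
Proof.
have bnorm_le i : bnorm z i <= norm2inf z by exact: le_bigmax.
by apply: le_trans (ler_sum _ (fun i _ => bnorm_le i)) _; rewrite sumr_const mulr_natl.
Qed.

Lemma sum_bnorm_le_norm2q (S : {set 'I_p}) z r : 1 < r ->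
  \sum_(i in S) bnorm z i <= #|S|%:R `^ (1 - r^-1) * norm2q r z.
Proof.
move=> r1; have r0 : 0 < r by exact: lt_trans r1.
have Q0 : 0 < (1 - r^-1)^-1 by rewrite invr_gt0 subr_gt0 invf_lt1.
have rQ : r^-1 + (1 - r^-1)^-1^-1 = 1 by rewrite invrK addrC subrK.
have indicator_pow : \sum_i ((i \in S)%:R : R) `^ (1 - r^-1)^-1 = #|S|%:R.
  rewrite (eq_bigr (fun i => if i \in S then 1 else 0)) => [|i _].
    by rewrite -big_mkcond sumr_const.
  by case: (i \in S); rewrite ?powR1 ?powR0 ?gt_eqF.
rewrite big_mkcond (eq_bigr (fun i => bnorm z i * (i \in S)%:R)) => [|i _]; last first.
  by case: (i \in S); rewrite ?mulr1 ?mulr0.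
apply: le_trans (hoelder_sum (bnorm_ge0 z) (fun i => ler0n _ _) r0 Q0 rQ) _.
by rewrite indicator_pow invrK mulrC.
Qed.

Lemma two_pow_kqE r z : two_pow_q r%:E * kq r%:E z =
  (norm21 z / (2 * norm2q r z)) `^ (r / (r - 1)).
Proof.
have r_1r : r / (1 - r) = - (r / (r - 1)) by rewrite -mulrN -invrN opprB.
have N_ge0 : 0 <= norm21 z / norm2q r z by rewrite divr_ge0 ?norm21_ge0 ?powR_ge0.
have two_gt0 : (0 : R) < 2 by rewrite ltr0n.
rewrite /two_pow_q /kq r_1r powRN invfM mulrA mulrAC (powR_divr _ N_ge0 two_gt0).
by rewrite mulrC.
Qed.

Lemma sum_bnorm_lt_kq_fin (S : {set 'I_p}) z r : 1 < r ->
    #|S|%:R < two_pow_q r%:E * kq r%:E z ->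
  2 * \sum_(i in S) bnorm z i < norm21 z.
Proof.
rewrite two_pow_kqE => r1.
set s := #|S|%:R; set Nq := norm2q r z; set c := norm21 z / (2 * Nq).
have r0 : 0 < r by exact: lt_trans r1.
have Q0 : 0 < r / (r - 1) by rewrite divr_gt0 ?subr_gt0.
have c_ge0 : c \is Num.nneg by rewrite nnegrE divr_ge0 ?norm21_ge0 ?mulr_ge0 ?powR_ge0.
move=> s_lt; have root_lt : s `^ (1 - r^-1) < c.
  have root_powK : (s `^ (1 - r^-1)) `^ (r / (r - 1)) = s.
    rewrite -powRrM [X in _ `^ X](_ : _ = 1) ?powRr1 ?ler0n //.
    by field; rewrite subr_eq0 !gt_eqF.
  have root_nneg : s `^ (1 - r^-1) \is Num.nneg by rewrite nnegrE powR_ge0.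
  rewrite ltNge; apply/negP => c_le.
  have := ge0_ler_powR (ltW Q0) c_ge0 root_nneg c_le.
  by rewrite root_powK leNgt s_lt.
(* Nq = 0 would force c = 0 (division by zero gives 0), contradicting root_lt. *)
have Nq_gt0 : 0 < Nq.
  rewrite lt_def powR_ge0 andbT; apply: contraTneq root_lt => Nq0.
  by rewrite /c Nq0 mulr0 invr0 mulr0 ltNge powR_ge0.
have -> : norm21 z = 2 * (c * Nq) by rewrite /c; field; rewrite gt_eqF.
rewrite ltr_pM2l //; apply: le_lt_trans (sum_bnorm_le_norm2q S z r1) _.
by rewrite ltr_pM2r.
Qed.

Lemma sum_bnorm_lt_kq_infty (S : {set 'I_p}) z :
    #|S|%:R < two_pow_q +oo%E * kq +oo%E z ->
  2 * \sum_(i in S) bnorm z i < norm21 z.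
Proof.
rewrite /two_pow_q /kq mulrCA -invfM => s_lt.
have Ninf_ge0 : 0 <= norm2inf z.
  apply: (big_ind (fun v => 0 <= v)) => // [a b a0 _|i _]; last exact: bnorm_ge0.
  by rewrite le_max a0.
have Ninf_gt0 : 0 < 2 * norm2inf z.
  rewrite lt_def (mulr_ge0 _ Ninf_ge0) ?ler0n // andbT.
  by apply: contraTneq s_lt => ->; rewrite invr0 mulr0 ltNge ler0n.
rewrite ltr_pdivlMr // in s_lt; apply: le_lt_trans s_lt.
by rewrite mulrCA ler_pM2l // sum_bnorm_le_norm2inf.
Qed.

Lemma sum_bnorm_lt_kq (S : {set 'I_p}) z q : (1 < q)%E ->
    #|S|%:R < two_pow_q q * kq q z ->
  2 * \sum_(i in S) bnorm z i < norm21 z.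
Proof.
case: q => [r||//] q1 kq_gt.
- by apply: sum_bnorm_lt_kq_fin kq_gt; rewrite -lte_fin.
- exact: sum_bnorm_lt_kq_infty kq_gt.
Qed.

End Blocks.

Section BlockNullSpaceProperty.
Variables (R : realType) (m p n : nat) (A : 'M[R]_(m, p * n)).

Definition block_nsp (S : {set 'I_p}) := forall z : 'cV[R]_(p * n),
  A *m z = 0 -> z != 0 -> \sum_(i in S) bnorm z i < \sum_(i in ~: S) bnorm z i.

Lemma block_nsp_norm21_lt (S : {set 'I_p}) (x w : 'cV[R]_(p * n)) :
    block_nsp S -> (forall i, i \notin S -> block x i = 0) ->
  A *m w = A *m x -> w != x -> norm21 x < norm21 w.
Proof.
move=> nsp x_off Aw wx.
have Az : A *m (w - x) = 0 by rewrite mulmxBr Aw subrr.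
have nsp_z := nsp _ Az; rewrite subr_eq0 in nsp_z; have {}nsp_z := nsp_z wx.
have x_on : \sum_(i in S) bnorm x i <=
    \sum_(i in S) bnorm w i + \sum_(i in S) bnorm (w - x) i.
  rewrite -big_split; apply: ler_sum => i _.
  by rewrite -{1}(subKr w x); exact: bnormB.
have x_out : \sum_(i in ~: S) bnorm x i = 0.
  by apply: big1 => i; rewrite inE => /x_off; rewrite bnormE => ->; exact: l2norm0.
have z_out : \sum_(i in ~: S) bnorm (w - x) i = \sum_(i in ~: S) bnorm w i.
  by apply: eq_bigr => i; rewrite inE => /x_off bx; rewrite !bnormE blockB bx subr0.
rewrite (norm21_split S x) (norm21_split S w) x_out addr0.
by apply: le_lt_trans x_on _; rewrite ltrD2l -z_out.
Qed.

Lemma block_nsp_of_kq (S : {set 'I_p}) q : (1 < q)%E ->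
    (forall z, A *m z = 0 -> z != 0 -> #|S|%:R < two_pow_q q * kq q z) ->
  block_nsp S.
Proof.
move=> q1 kq_gt z Az z0; have := sum_bnorm_lt_kq q1 (kq_gt z Az z0).
by rewrite (norm21_split S) mulr_natl mulr2n ltrD2l.
Qed.

End BlockNullSpaceProperty.

Theorem proposition1 (R : realType) (m p n k : nat)
    (A : 'M[R]_(m, p * n)) (x : 'cV[R]_(p * n)) :
  (norm20 x <= k)%N ->
  (exists q : \bar R, (1 < q)%E /\
     ((k%:R)%:E < ereal_inf
        [set (two_pow_q q * kq q z)%:E | z in [set z : 'cV[R]_(p * n) | (A *m z = 0 /\ z != 0)%R]])%E) ->
  [set z : 'cV[R]_(p * n) | A *m z = A *m x /\
     forall w : 'cV[R]_(p * n), A *m w = A *m x -> norm21 z <= norm21 w] = [set x].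
Proof.
move=> x_sparse [q [q1 kq_gt]].
set S := [set i | block x i != 0]%SET.
have nsp : block_nsp A S.
  apply: (block_nsp_of_kq q1) => z Az z0.
  apply: (le_lt_trans (y := k%:R)); first by rewrite ler_nat.
  by rewrite -lte_fin; apply: lt_le_trans kq_gt _; apply: ereal_inf_lbound; exists z.
have x_off i : i \notin S -> block x i = 0 by rewrite inE negbK => /eqP.
have x_min := block_nsp_norm21_lt nsp x_off.
apply/seteqP; split => [z [Az z_min] | z ->] /=.
- have [//|zx] := eqVneq z x.
  by have := x_min z Az zx; rewrite ltNge z_min.
- split=> // w Aw; have [->//|wx] := eqVneq w x.
  exact/ltW/x_min.
Qed.
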